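(* Let $n \geq 2$ be a natural number. The following conditions are equivalent: (a) $\lfloor \sqrt{2}\,n \rfloor$ is even. (b) $\left\{ \frac{n}{\sqrt{2}} \right\} \leq \frac{1}{2}$. (c) $\left\{ \frac{n}{\sqrt{2}} \right\} < \frac{1}{2}$. (d) $\left\lfloor \sqrt{2}\,n \left\lfloor \frac{n}{\sqrt{2}} \right\rfloor \right\rfloor = \left\lfloor \frac{n}{\sqrt{2}} \lfloor \sqrt{2}\,n \rfloor \right\rfloor$. (e) $\left\lfloor \frac{n}{\sqrt{2}} \right\rfloor = \left\lfloor \sqrt{ n^2 - \left\lfloor \frac{n}{\sqrt{2}} \right\rfloor^2 } \right\rfloor$. (f) $\left\{ \frac{n}{\sqrt{2}} \right\} < \sqrt{ \left\lfloor \frac{n}{\sqrt{2}} \right\rfloor^2 + \left\lfloor \frac{n}{\sqrt{2}} \right\rfloor + \frac{1}{2} } - \left\lfloor \frac{n}{\sqrt{2}} \right\rfloor$.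
   Context: $\lfloor x \rfloor$ denotes the floor of a real number $x$ and $\{x\} = x - \lfloor x \rfloor$ denotes its fractional part. *)

From Stdlib Require Export Reals ZArith.
Open Scope R_scope.

(* floor of a real number, as an integer: Int_part x = up x - 1 is the floor *)
Definition floorZ (x : R) : Z := Int_part x.
Definition floorR (x : R) : R := IZR (floorZ x).
Definition fracR (x : R) : R := x - floorR x.

(** Put x = n/√2 and m = ⌊x⌋, so that √2 n = 2x and n² = 2x².  Every condition
    reduces to the position of x in [m, m + 1): if {x} < 1/2 then ⌊2x⌋ = 2m and
    m² ≤ n² - m² < m² + 2m + 1/2, and all six conditions hold; if {x} ≥ 1/2
    then ⌊2x⌋ = 2m + 1 and n² ≥ 2(m + 1/2)² = 2m² + 2m + 1/2, which by
    integrality of n² improves to n² ≥ 2m² + 2m + 1, and all six fail.  The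
    same integrality rules out {x} = 1/2, so (b) and (c) agree. *)

From Stdlib Require Import Reals ZArith.
From Stdlib Require Import Lra Lia Psatz.
Open Scope R_scope.

Lemma floorR_bounds (x : R) : floorR x <= x < floorR x + 1.
Proof. unfold floorR, floorZ. destruct (base_Int_part x). lra. Qed.

Lemma floorZ_of_bounds (x : R) (k : Z) : IZR k <= x < IZR k + 1 -> floorZ x = k.
Proof. intros Hk. unfold floorZ. symmetry. apply Int_part_spec. lra. Qed.

Lemma floorR_ge (x : R) (k : Z) : IZR k <= x -> IZR k <= floorR x.
Proof.
  intros Hk. destruct (floorR_bounds x) as [_ Hx]. unfold floorR in *.
  apply IZR_le.
  assert (k < floorZ x + 1)%Z by (apply lt_IZR; rewrite plus_IZR; lra).
  lia.
Qed.

Lemma floorR_ge0 (x : R) : 0 <= x -> 0 <= floorR x.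
Proof. apply (floorR_ge x 0). Qed.

Lemma floorZ_double_lt (x : R) : fracR x < 1 / 2 -> floorZ (2 * x) = (2 * floorZ x)%Z.
Proof.
  unfold fracR. intros Hx. destruct (floorR_bounds x). unfold floorR in *.
  apply floorZ_of_bounds. rewrite mult_IZR. lra.
Qed.

Lemma floorZ_double_ge (x : R) :
  1 / 2 <= fracR x -> floorZ (2 * x) = (2 * floorZ x + 1)%Z.
Proof.
  unfold fracR. intros Hx. destruct (floorR_bounds x). unfold floorR in *.
  apply floorZ_of_bounds. rewrite plus_IZR, mult_IZR. lra.
Qed.

Lemma even_floorZ_double (x : R) :
  Z.even (floorZ (2 * x)) = true <-> fracR x < 1 / 2.
Proof.
  destruct (Rlt_or_le (fracR x) (1 / 2)) as [Hx | Hx].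
  - rewrite floorZ_double_lt by exact Hx. rewrite Z.even_mul. tauto.
  - rewrite floorZ_double_ge by exact Hx. rewrite Z.even_add, Z.even_mul.
    simpl. split; [discriminate | lra].
Qed.

Lemma le_sqrt_of_sq_le (a y : R) : 0 <= a -> a ^ 2 <= y -> a <= sqrt y.
Proof. intros Ha Hy. rewrite <- (sqrt_pow2 a Ha). now apply sqrt_le_1_alt. Qed.

Lemma sqrt_lt_of_lt_sq (a y : R) : 0 <= a -> 0 <= y -> y < a ^ 2 -> sqrt y < a.
Proof. intros Ha Hy Hya. rewrite <- (sqrt_pow2 a Ha). now apply sqrt_lt_1_alt. Qed.

Lemma lt_sqrt_iff (a y : R) : 0 <= a -> a < sqrt y <-> a ^ 2 < y.
Proof.
  intros Ha. rewrite <- (sqrt_pow2 a Ha) at 1. split.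
  - apply sqrt_lt_0_alt.
  - intros Hy. apply sqrt_lt_1_alt. split; [nra | exact Hy].
Qed.

Lemma floorR_cross_mul_floor_iff (x : R) : 1 <= x ->
  floorR (2 * x * floorR x) = floorR (x * floorR (2 * x)) <-> fracR x < 1 / 2.
Proof.
  intros Hx. destruct (Rlt_or_le (fracR x) (1 / 2)) as [Hfr | Hfr].
  - unfold floorR at 4. rewrite floorZ_double_lt, mult_IZR by exact Hfr.
    split; [intros _; exact Hfr | intros _].
    fold (floorR x). f_equal. ring.
  - unfold floorR at 4. rewrite floorZ_double_ge, plus_IZR, mult_IZR by exact Hfr.
    fold (floorR x). split; [intros Heq | lra]. exfalso.
    assert (Hsucc : floorR (2 * x * floorR x) + 1 <= floorR (x * (2 * floorR x + 1))).
    { destruct (floorR_bounds (2 * x * floorR x)).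
      unfold floorR at 1. rewrite <- plus_IZR. apply floorR_ge.
      rewrite plus_IZR. fold (floorR (2 * x * floorR x)). lra. }
    lra.
Qed.

Section DoubleSquareIntegral.

Variables (x : R) (k : Z).
Hypothesis x_ge0 : 0 <= x.
Hypothesis double_sq_x : 2 * x ^ 2 = IZR k.

Lemma double_sq_ge_of_frac_ge_half :
  1 / 2 <= fracR x -> 2 * floorR x ^ 2 + 2 * floorR x + 1 <= 2 * x ^ 2.
Proof.
  unfold fracR. intros Hfr.
  assert (Hm := floorR_ge0 x x_ge0). unfold floorR in *.
  set (m := floorZ x) in *.
  assert (Hk : (2 * (m * m) + 2 * m < k)%Z).
  { apply lt_IZR. rewrite <- double_sq_x, !plus_IZR, !mult_IZR. nra. }
  assert (Hk1 : IZR (2 * (m * m) + 2 * m + 1) <= IZR k) by (apply IZR_le; lia).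
  rewrite !plus_IZR, !mult_IZR in Hk1. nra.
Qed.

Lemma fracR_neq_half : fracR x <> 1 / 2.
Proof.
  intros Hfr. assert (Hsq := double_sq_ge_of_frac_ge_half (Req_le_sym _ _ Hfr)).
  unfold fracR in Hfr. set (m := floorR x) in *.
  assert (Ex : x = m + 1 / 2) by lra. rewrite Ex in Hsq. nra.
Qed.

Lemma fracR_le_half_iff : fracR x <= 1 / 2 <-> fracR x < 1 / 2.
Proof. generalize fracR_neq_half. lra. Qed.

Lemma floorR_sqrt_double_sq_sub_iff :
  floorR x = floorR (sqrt (2 * x ^ 2 - floorR x ^ 2)) <-> fracR x < 1 / 2.
Proof.
  assert (Hm := floorR_ge0 x x_ge0). destruct (floorR_bounds x) as [Hmx _].
  destruct (Rlt_or_le (fracR x) (1 / 2)) as [Hfr | Hfr].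
  - split; [intros _; exact Hfr | intros _]. unfold fracR in Hfr.
    unfold floorR at 1 2. f_equal. symmetry. apply floorZ_of_bounds. fold (floorR x).
    split.
    + apply le_sqrt_of_sq_le; nra.
    + apply sqrt_lt_of_lt_sq; nra.
  - split; [intros Heq | lra]. exfalso.
    assert (Hsq := double_sq_ge_of_frac_ge_half Hfr).
    assert (Hsqrt : floorR x + 1 <= sqrt (2 * x ^ 2 - floorR x ^ 2))
      by (apply le_sqrt_of_sq_le; nra).
    unfold floorR at 1 in Hsqrt. rewrite <- plus_IZR in Hsqrt.
    apply floorR_ge in Hsqrt. rewrite plus_IZR in Hsqrt. fold (floorR x) in Hsqrt.
    lra.
Qed.

Lemma fracR_lt_sqrt_sub_floorR_iff :
  fracR x < sqrt (floorR x ^ 2 + floorR x + 1 / 2) - floorR x <-> fracR x < 1 / 2.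
Proof.
  unfold fracR at 1.
  assert (Hsqrt : x - floorR x < sqrt (floorR x ^ 2 + floorR x + 1 / 2) - floorR x
                  <-> x ^ 2 < floorR x ^ 2 + floorR x + 1 / 2).
  { rewrite <- lt_sqrt_iff by exact x_ge0. lra. }
  rewrite Hsqrt.
  assert (Hm := floorR_ge0 x x_ge0). destruct (floorR_bounds x) as [Hmx _].
  destruct (Rlt_or_le (fracR x) (1 / 2)) as [Hfr | Hfr].
  - split; [intros _; exact Hfr | intros _]. unfold fracR in Hfr. nra.
  - assert (Hsq := double_sq_ge_of_frac_ge_half Hfr). lra.
Qed.

End DoubleSquareIntegral.

Lemma sqrt2_mul (y : R) : sqrt 2 * y = 2 * (y / sqrt 2).
Proof.
  rewrite <- (sqrt_sqrt 2) at 2 by lra.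
  field. apply Rgt_not_eq, Rlt_sqrt2_0.
Qed.

Lemma double_sq_div_sqrt2 (y : R) : 2 * (y / sqrt 2) ^ 2 = y ^ 2.
Proof.
  rewrite <- (sqrt_sqrt 2) at 1 by lra.
  field. apply Rgt_not_eq, Rlt_sqrt2_0.
Qed.

Theorem theorem1 (n : nat) (hn : (2 <= n)%nat) :
  let N := INR n in
  let a := Z.even (floorZ (sqrt 2 * N)) = true in
  let b := fracR (N / sqrt 2) <= 1 / 2 in
  let c := fracR (N / sqrt 2) < 1 / 2 in
  let d := floorR (sqrt 2 * N * floorR (N / sqrt 2))
           = floorR (N / sqrt 2 * floorR (sqrt 2 * N)) in
  let e := floorR (N / sqrt 2)
           = floorR (sqrt (N ^ 2 - floorR (N / sqrt 2) ^ 2)) in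
  let f := fracR (N / sqrt 2)
           < sqrt (floorR (N / sqrt 2) ^ 2 + floorR (N / sqrt 2) + 1 / 2)
             - floorR (N / sqrt 2) in
  (a <-> b) /\ (a <-> c) /\ (a <-> d) /\ (a <-> e) /\ (a <-> f).
Proof.
  intros N a b c d e f; unfold a, b, c, d, e, f; clear a b c d e f.
  rewrite !sqrt2_mul, <- (double_sq_div_sqrt2 N).
  set (x := N / sqrt 2).
  assert (Hsq : 2 * x ^ 2 = IZR (Z.of_nat n * Z.of_nat n)).
  { unfold x, N. rewrite double_sq_div_sqrt2, mult_IZR, <- INR_IZR_INZ. ring. }
  assert (Hx1 : 1 <= x).
  { assert (2 <= N) by (apply (le_INR 2); exact hn).
    assert (0 < x) by (apply Rdiv_lt_0_compat; [lra | apply Rlt_sqrt2_0]).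
    assert (2 * x ^ 2 = N ^ 2) by apply double_sq_div_sqrt2. nra. }
  assert (Hx0 : 0 <= x) by lra.
  pose proof (even_floorZ_double x).
  pose proof (fracR_le_half_iff x _ Hx0 Hsq).
  pose proof (floorR_cross_mul_floor_iff x Hx1).
  pose proof (floorR_sqrt_double_sq_sub_iff x _ Hx0 Hsq).
  pose proof (fracR_lt_sqrt_sub_floorR_iff x _ Hx0 Hsq).
  tauto.
Qed.
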